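(* Let $\mathcal{H}$ be a finite-dimensional Hilbert space, $U$ a unitary on $\mathcal{H}$ and $\Pi,\widetilde\Pi$ orthogonal projectors on $\mathcal{H}$. Let $n\ge1$, $\Phi=(\phi_1,\ldots,\phi_n)\in\mathbb{R}^n$, and let $P\in\mathbb{C}[x]$ be a polynomial of degree at most $n$ such that for all $x\in[-1,1]$ the top-left entry of $\prod_{j=1}^n\left(e^{i\phi_j\sigma_z}R(x)\right)$ equals $P(x)$ (such a $P$ exists and has parity $(n\bmod 2)$). Then $$P^{(SV)}(\widetilde\Pi U\Pi)=\begin{cases}\widetilde\Pi U_\Phi\Pi & \text{if } n \text{ is odd},\\ \Pi U_\Phi\Pi & \text{if } n\text{ is even}.\end{cases}$$
   Context: $\sigma_z=\mathrm{diag}(1,-1)$; $R(x)=\begin{pmatrix} x & \sqrt{1-x^2}\\ \sqrt{1-x^2} & -x\end{pmatrix}$; $\prod_{j=1}^n M_j=M_1\cdots M_n$. Alternating phase modulation sequence: for $n$ odd, $U_\Phi:=e^{i\phi_1(2\widetilde\Pi-I)}U\prod_{j=1}^{(n-1)/2}\left(e^{i\phi_{2j}(2\Pi-I)}U^\dagger e^{i\phi_{2j+1}(2\widetilde\Pi-I)}U\right)$; for $n$ even, $U_\Phi:=\prod_{j=1}^{n/2}\left(e^{i\phi_{2j-1}(2\Pi-I)}U^\dagger e^{i\phi_{2j}(2\widetilde\Pi-I)}U\right)$. Singular value transformation: let $A=\widetilde\Pi U\Pi$, $d=\mathrm{rank}\,\Pi$, $\tilde d=\mathrm{rank}\,\widetilde\Pi$,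 $d_{\min}=\min(d,\tilde d)$, and write $A=\sum_{i=1}^{d_{\min}}\varsigma_i|\tilde\psi_i\rangle\langle\psi_i|$ with $\varsigma_i\ge0$, $(|\psi_i\rangle)_{i\in[d]}$ an orthonormal basis of $\mathrm{img}\,\Pi$ and $(|\tilde\psi_i\rangle)_{i\in[\tilde d]}$ an orthonormal basis of $\mathrm{img}\,\widetilde\Pi$; set $\varsigma_i:=0$ for $d_{\min}<i\le d$. For an odd function $f$, $f^{(SV)}(A):=\sum_{i=1}^{d_{\min}}f(\varsigma_i)|\tilde\psi_i\rangle\langle\psi_i|$; for an even $f$, $f^{(SV)}(A):=\sum_{i=1}^{d}f(\varsigma_i)|\psi_i\rangle\langle\psi_i|$. *)

(* Complex numbers = an arbitrary numClosedFieldType C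
   (e.g. the complex numbers); the finite-dimensional Hilbert space is C^N
   (column vectors 'cV[C]_N) with the standard inner product, operators are
   'M[C]_N, and the adjoint is  M ^t*  (conjugate transpose, spectral.v). *)
From HB Require Import structures.
From mathcomp Require Import all_boot all_order all_algebra.
Set Implicit Arguments. Unset Strict Implicit. Unset Printing Implicit Defensive.
Import Order.TTheory GRing.Theory Num.Theory.
Local Open Scope ring_scope.
Local Open Scope sesquilinear_scope.

Section Defs.
Variable C : numClosedFieldType.

Definition orth_proj N (Q : 'M[C]_N) : Prop := Q *m Q = Q /\ Q ^t* = Q.

(* exp(i phi (2Q - I)) where w = e^{i phi} (|w| = 1) and Q is an orthogonal
   projector: 2Q - I has eigenvalue +1 on img Q and -1 on ker Q, hence
   exp(i phi (2Q - I)) = e^{i phi} Q + e^{-i phi} (I - Q). *)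
Definition phase_refl N (w : C) (Q : 'M[C]_N) : 'M[C]_N :=
  w *: Q + w^* *: (1%:M - Q).

(* exp(i phi sigma_z) = diag(e^{i phi}, e^{-i phi}) with w = e^{i phi}. *)
Definition exp_sz (w : C) : 'M[C]_2 :=
  \matrix_(i < 2, j < 2)
    (if i == j then (if i == 0 :> 'I_2 then w else w^*) else 0).

Definition Rmx (x : C) : 'M[C]_2 :=
  \matrix_(i < 2, j < 2)
    (if i == j then (if i == 0 :> 'I_2 then x else - x)
     else sqrtC (1 - x ^+ 2)).

Definition qsp_mx (n : nat) (w : nat -> C) (x : C) : 'M[C]_2 :=
  \big[mulmx/1%:M]_(1 <= j < n.+1) (exp_sz (w j) *m Rmx x).

Definition UPhi N (n : nat) (w : nat -> C) (U Pi Pit : 'M[C]_N) : 'M[C]_N :=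
  if odd n then
    phase_refl (w 1%N) Pit *m U *m
    \big[mulmx/1%:M]_(1 <= j < (n.-1)./2.+1)
      (phase_refl (w (2 * j)%N) Pi *m U ^t* *m
       phase_refl (w (2 * j).+1) Pit *m U)
  else
    \big[mulmx/1%:M]_(1 <= j < n./2.+1)
      (phase_refl (w (2 * j).-1) Pi *m U ^t* *m
       phase_refl (w (2 * j)%N) Pit *m U).

(* (psi_i)_{i<d} is an orthonormal basis of img Q (column space of Q). *)
Definition onb_of N d (Q : 'M[C]_N) (psi : 'I_d -> 'cV[C]_N) : Prop :=
  (forall i j : 'I_d, (psi i) ^t* *m psi j = (i == j)%:R%:M) /\
  (\matrix_(i < d) (psi i)^T == Q^T)%MS.

Definition is_svd N (A Pi Pit : 'M[C]_N)
    (psi : 'I_(\rank Pi) -> 'cV[C]_N) (psit : 'I_(\rank Pit) -> 'cV[C]_N)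
    (s : 'I_(\rank Pi) -> C) : Prop :=
  onb_of Pi psi /\ onb_of Pit psit /\
  (forall i, 0 <= s i) /\
  (forall i : 'I_(\rank Pi), (minn (\rank Pi) (\rank Pit) <= i)%N -> s i = 0) /\
  A = \sum_(i < minn (\rank Pi) (\rank Pit))
        s (widen_ord (geq_minl _ _) i) *:
          (psit (widen_ord (geq_minr _ _) i) *m (psi (widen_ord (geq_minl _ _) i)) ^t*).

Definition svt_odd N (Pi Pit : 'M[C]_N) (f : C -> C)
    (psi : 'I_(\rank Pi) -> 'cV[C]_N) (psit : 'I_(\rank Pit) -> 'cV[C]_N)
    (s : 'I_(\rank Pi) -> C) : 'M[C]_N :=
  \sum_(i < minn (\rank Pi) (\rank Pit))
     f (s (widen_ord (geq_minl _ _) i)) *: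
       (psit (widen_ord (geq_minr _ _) i) *m (psi (widen_ord (geq_minl _ _) i)) ^t*).

Definition svt_even N (Pi : 'M[C]_N) (f : C -> C)
    (psi : 'I_(\rank Pi) -> 'cV[C]_N) (s : 'I_(\rank Pi) -> C) : 'M[C]_N :=
  \sum_(i < \rank Pi) f (s i) *: (psi i *m (psi i) ^t*).

End Defs.

Arguments svt_odd {C N} Pi Pit f psi psit s.
Arguments svt_even {C N} Pi f psi s.
Arguments is_svd {C N} A Pi Pit psi psit s.
Arguments onb_of {C N d} Q psi.

From HB Require Import structures.
From mathcomp Require Import all_boot all_order all_algebra.
From mathcomp Require Import ring.
Import Order.TTheory GRing.Theory Num.Theory.
Local Open Scope ring_scope.
Local Open Scope sesquilinear_scope.

(* For a right singular vector psi of A = Pit U Pi with singular value s, the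
   vectors psi and psi' := U^* Pit U psi - s^2 psi span a plane that U maps onto
   the plane spanned by phi := Pit U psi and phi' := U psi - phi (Jordan's lemma).
   Both phase reflections act diagonally on these planes, so U_Phi psi stays in
   one of them, and its two coordinates, as polynomials in t = s^2, obey the same
   recursion as the first column of the product of the e^{i phi_j sigma_z} R(x),
   whose entries are x^(n mod 2) a(x^2) and x^(1 - n mod 2) sqrt(1 - x^2) b(x^2).
   Hence P(x) = x^(n mod 2) a(x^2), and projecting onto img Pit (n odd) or img Pi
   (n even) and summing over the basis psi yields P^(SV)(A). *)

Section Adjoint.
Variable C : numClosedFieldType.

Lemma adjmxM m n p (A : 'M[C]_(m, n)) (B : 'M[C]_(n, p)) : (A *m B)^t* = B^t* *m A^t*.
Proof. by rewrite trmx_mul map_mxM. Qed.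

Lemma adjmxZ m n a (A : 'M[C]_(m, n)) : (a *: A)^t* = a^* *: A^t*.
Proof. by rewrite linearZ map_mxZ. Qed.

Lemma adjmx_sum m n d (F : 'I_d -> 'M[C]_(m, n)) : (\sum_i F i)^t* = \sum_i (F i)^t*.
Proof. by rewrite raddf_sum map_mx_sum. Qed.

End Adjoint.

Section OrthonormalBasis.
Variables (C : numClosedFieldType) (N d : nat) (Q : 'M[C]_N) (psi : 'I_d -> 'cV[C]_N).
Hypotheses (hQ : orth_proj Q) (hpsi : onb_of Q psi).

Let Psi : 'M[C]_(N, d) := (\matrix_(i < d) (psi i)^T)^T.

Lemma onb_col i : col i Psi = psi i.
Proof. by rewrite -[LHS]trmxK tr_col trmxK rowK trmxK. Qed.

Lemma onb_proj_mx : Q *m Psi = Psi.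
Proof.
rewrite /Psi; have [Y ->] := submxP (andP hpsi.2).1.
by rewrite trmx_mul trmxK mulmxA hQ.1.
Qed.

Lemma onb_proj_fix i : Q *m psi i = psi i.
Proof. by rewrite -onb_col !colE mulmxA onb_proj_mx. Qed.

Lemma onb_outer_sum : Q = \sum_i psi i *m (psi i)^t*.
Proof.
have [Z defQ] := submxP (andP hpsi.2).2.
have -> : \sum_i psi i *m (psi i)^t* = Psi *m Psi^t*.
  apply/matrixP => a b; rewrite summxE mxE; apply: eq_bigr => i _.
  by rewrite !mxE big_ord1 !mxE.
have Psi_isometry : Psi^t* *m Psi = 1%:M.
  apply/matrixP => i j.
  have := congr1 (fun M : 'M[C]_1 => M ord0 ord0) (hpsi.1 i j).
  rewrite /= !mxE mulr1n => <-.
  by apply: eq_bigr => a _; rewrite !mxE.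
have SQ : Psi *m Psi^t* *m Q = Q.
  by rewrite -[Q]trmxK defQ trmx_mul !mulmxA -(mulmxA Psi) Psi_isometry mulmx1.
have S_herm : (Psi *m Psi^t*)^t* = Psi *m Psi^t* by rewrite adjmxM trmxCK.
by rewrite -{1}SQ -{1}hQ.2 -S_herm -adjmxM mulmxA onb_proj_mx S_herm.
Qed.

End OrthonormalBasis.

Arguments onb_proj_fix {C N d Q psi}.
Arguments onb_outer_sum {C N d Q psi}.

Section QspPolynomials.
Variable C : numClosedFieldType.
Implicit Types (v : nat -> C) (x : C).

(* The pair (a, b) of reduced polynomials of the first column of qsp_mx k v,
   in the sense of qsp_mx_col. *)
Fixpoint qsp_poly (k : nat) v : {poly C} * {poly C} :=
  if k is k'.+1 then
    let p := qsp_poly k' (fun j => v j.+1) in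
    if odd k' then (v 1%N *: ('X * p.1 + (1 - 'X) * p.2), (v 1%N)^* *: (p.1 - p.2))
    else (v 1%N *: (p.1 + (1 - 'X) * p.2), (v 1%N)^* *: (p.1 - 'X * p.2))
  else (1, 0).

Lemma qsp_mx_recl k v x :
  qsp_mx k.+1 v x = (exp_sz (v 1%N) *m Rmx x) *m qsp_mx k (fun j => v j.+1) x.
Proof. by rewrite /qsp_mx big_nat_recl. Qed.

Let i1 : 'I_2 := @Ordinal 2 1 isT.

Lemma mulmx2E (A B : 'M[C]_2) i j :
  (A *m B) i j = A i ord0 * B ord0 j + A i i1 * B i1 j.
Proof.
rewrite mxE !big_ord_recl big_ord0 addr0.
by have -> : lift ord0 ord0 = i1 by apply/val_inj.
Qed.

Lemma exp_sz_Rmx_entries (w x : C) : let F := exp_sz w *m Rmx x in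
  [/\ F ord0 ord0 = w * x, F ord0 i1 = w * sqrtC (1 - x ^+ 2),
      F i1 ord0 = w^* * sqrtC (1 - x ^+ 2) & F i1 i1 = - (w^* * x)].
Proof. by rewrite /= !mulmx2E !mxE /=; split; ring. Qed.

Lemma qsp_mx_col k v x :
  qsp_mx k v x ord0 ord0 = (if odd k then x else 1) * (qsp_poly k v).1.[x ^+ 2] /\
  qsp_mx k v x i1 ord0 =
    (if odd k then 1 else x) * sqrtC (1 - x ^+ 2) * (qsp_poly k v).2.[x ^+ 2].
Proof.
elim: k v => [|k IHk] v.
  by rewrite /qsp_mx big_geq // !mxE /= !hornerE.
have [top bot] := IHk (fun j => v j.+1).
have sqrt_sq := sqrtCK (1 - x ^+ 2).
rewrite qsp_mx_recl.
have [F00 F01 F10 F11] := exp_sz_Rmx_entries (v 1%N) x.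
rewrite !(mulmx2E (exp_sz _ *m _)) F00 F01 F10 F11 top bot oddS [qsp_poly k.+1 v]/=.
set y := sqrtC (1 - x ^+ 2) in sqrt_sq *.
case: (odd k) => /=;
  rewrite !(hornerZ, hornerD, hornerN, hornerM, hornerX, hornerC).
all: by split; rewrite -?sqrt_sq; ring.
Qed.

End QspPolynomials.

Arguments qsp_poly {C}.
Arguments qsp_mx_col {C}.

Section InvariantPlane.
Variables (C : numClosedFieldType) (N : nat) (U Pi Pit : 'M[C]_N).
Implicit Types (v : nat -> C) (w : C).

Lemma UPhi_recl k v :
  UPhi k.+1 v U Pi Pit =
  (if odd k then phase_refl (v 1%N) Pi *m U ^t* else phase_refl (v 1%N) Pit *m U)
    *m UPhi k (fun j => v j.+1) U Pi Pit.
Proof.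
rewrite /UPhi oddS; case: (boolP (odd k)) => /= [|_].
- case: k => [|k] //= _.
  rewrite big_nat_recl // !mulmxA; congr (_ *m _).
  apply: eq_big_nat => j _.
  by rewrite mulnS.
- by congr (_ *m _); apply: eq_big_nat => -[].
Qed.

Lemma phase_reflE w (Q : 'M[C]_N) (z : 'cV[C]_N) :
  phase_refl w Q *m z = w *: (Q *m z) + w^* *: (z - Q *m z).
Proof. by rewrite /phase_refl mulmxDl -!scalemxAl mulmxBl mul1mx. Qed.

Lemma mulmx_lincomb m p (M : 'M[C]_(m, N)) (x y : 'M[C]_(N, p)) a b :
  M *m (a *: x + b *: y) = a *: (M *m x) + b *: (M *m y).
Proof. by rewrite mulmxDr -!scalemxAr. Qed.

Lemma lincomb_compose m p (x y : 'M[C]_(m, p)) a b a1 b1 a2 b2 :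
  a *: (a1 *: x + b1 *: y) + b *: (a2 *: x + b2 *: y) =
  (a * a1 + b * a2) *: x + (a * b1 + b * b2) *: y.
Proof.
rewrite !scalerDr !scalerA !scalerDl -!addrA; congr (_ + _).
by rewrite addrCA.
Qed.

Hypotheses (hU : U *m U ^t* = 1%:M) (hU' : U ^t* *m U = 1%:M).
Hypothesis hPit : Pit *m Pit = Pit.
Variables (psi : 'cV[C]_N) (t : C).
Hypothesis hpsi : Pi *m psi = psi.
Let phi := Pit *m (U *m psi).
Let phi' := U *m psi - phi.
Let psi' := U ^t* *m phi - t *: psi.
Hypothesis hgram : Pi *m (U ^t* *m phi) = t *: psi.

Lemma Pit_phi : Pit *m phi = phi.
Proof. by rewrite mulmxA hPit. Qed.

Lemma Pit_phi' : Pit *m phi' = 0.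
Proof. by rewrite mulmxBr Pit_phi subrr. Qed.

Lemma Pi_psi' : Pi *m psi' = 0.
Proof. by rewrite mulmxBr hgram -scalemxAr hpsi subrr. Qed.

(* Images are written in coordinates, with explicit coefficients 1, 0, -1, so
   that the recursion in UPhi_mulmx is a product of 2x2 coordinate matrices. *)
Lemma mulU_psi : U *m psi = 1 *: phi + 1 *: phi'.
Proof. by rewrite !scale1r addrC subrK. Qed.

Lemma mulU_psi' : U *m psi' = (1 - t) *: phi + (- t) *: phi'.
Proof.
rewrite mulmxBr mulmxA hU mul1mx -scalemxAr mulU_psi !scale1r.
by rewrite scalerDr scalerBl scale1r scaleNr opprD addrA.
Qed.

Lemma mulUadj_phi : U ^t* *m phi = t *: psi + 1 *: psi'.
Proof. by rewrite scale1r addrC subrK. Qed.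

Lemma mulUadj_phi' : U ^t* *m phi' = (1 - t) *: psi + (-1) *: psi'.
Proof.
rewrite mulmxBr mulmxA hU' mul1mx mulUadj_phi scale1r scaleN1r scalerBl scale1r.
by rewrite opprD addrA.
Qed.

Lemma phase_refl_phi w : phase_refl w Pit *m phi = w *: phi + 0 *: phi'.
Proof. by rewrite phase_reflE Pit_phi subrr scaler0 scale0r !addr0. Qed.

Lemma phase_refl_phi' w : phase_refl w Pit *m phi' = 0 *: phi + w^* *: phi'.
Proof. by rewrite phase_reflE Pit_phi' subr0 scaler0 scale0r !add0r. Qed.

Lemma phase_refl_psi w : phase_refl w Pi *m psi = w *: psi + 0 *: psi'.
Proof. by rewrite phase_reflE hpsi subrr scaler0 scale0r !addr0. Qed.

Lemma phase_refl_psi' w : phase_refl w Pi *m psi' = 0 *: psi + w^* *: psi'.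
Proof. by rewrite phase_reflE Pi_psi' subr0 scaler0 scale0r !add0r. Qed.

Lemma UPhi_mulmx k v :
  UPhi k v U Pi Pit *m psi =
  if odd k then (qsp_poly k v).1.[t] *: phi + (qsp_poly k v).2.[t] *: phi'
  else (qsp_poly k v).1.[t] *: psi + (qsp_poly k v).2.[t] *: psi'.
Proof.
elim: k v => [|k IHk] v.
  by rewrite /UPhi /= big_geq // mul1mx hornerC horner0 scale1r scale0r addr0.
rewrite UPhi_recl -mulmxA IHk oddS [qsp_poly k.+1 v]/=.
case: (odd k) => /=.
- rewrite -mulmxA mulmx_lincomb mulUadj_phi mulUadj_phi' lincomb_compose.
  rewrite mulmx_lincomb phase_refl_psi phase_refl_psi' lincomb_compose.
  rewrite !(hornerZ, hornerD, hornerN, hornerM, hornerX, hornerC).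
  by congr (_ *: _ + _ *: _); ring.
- rewrite -mulmxA mulmx_lincomb mulU_psi mulU_psi' lincomb_compose.
  rewrite mulmx_lincomb phase_refl_phi phase_refl_phi' lincomb_compose.
  rewrite !(hornerZ, hornerD, hornerN, hornerM, hornerX, hornerC).
  by congr (_ *: _ + _ *: _); ring.
Qed.

Lemma Pit_UPhi_odd k v : odd k ->
  Pit *m (UPhi k v U Pi Pit *m psi) = (qsp_poly k v).1.[t] *: (Pit *m (U *m psi)).
Proof.
by move=> k_odd; rewrite UPhi_mulmx k_odd mulmx_lincomb Pit_phi Pit_phi' scaler0 addr0.
Qed.

Lemma Pi_UPhi_even k v : ~~ odd k ->
  Pi *m (UPhi k v U Pi Pit *m psi) = (qsp_poly k v).1.[t] *: psi.
Proof.
by move=> /negbTE k_even; rewrite UPhi_mulmx k_even mulmx_lincomb hpsi Pi_psi' scaler0 addr0.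
Qed.

End InvariantPlane.

Arguments Pit_UPhi_odd {C N U Pi Pit} hU hU' hPit {psi t} hpsi hgram {k v}.
Arguments Pi_UPhi_even {C N U Pi Pit} hU hU' hPit {psi t} hpsi hgram {k v}.

Section QspPolynomialIdentity.
Variable C : numClosedFieldType.

Lemma poly_eq_on_unit_interval (p q : {poly C}) :
  (forall x : C, x \is Num.real -> -1 <= x <= 1 -> p.[x] = q.[x]) -> p = q.
Proof.
move=> pq; apply/eqP; rewrite -subr_eq0; apply/negPn/negP => pq_neq0.
set r := p - q in pq_neq0.
pose roots := [seq ((i.+1)%:R : C)^-1 | i <- iota 0 (size r)].
suff : (size roots < size r)%N by rewrite size_map size_iota ltnn.
apply: max_poly_roots pq_neq0 _ _.
- apply/allP => _ /mapP [i _ ->]; rewrite /root /r hornerD hornerN pq ?subrr //.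
    by rewrite rpredV realn.
  rewrite invf_le1 ?ler1n ?ltr0n // andbT.
  by rewrite (le_trans (lerN10 _)) // invr_ge0 ler0n.
- rewrite map_inj_uniq ?iota_uniq // => i j /invr_inj /eqP.
  by rewrite eqr_nat => /eqP [].
Qed.

Lemma qsp_top_left_poly n w (P : {poly C}) :
  (forall x : C, x \is Num.real -> -1 <= x <= 1 -> qsp_mx n w x ord0 ord0 = P.[x]) ->
  forall x, P.[x] = (if odd n then x else 1) * (qsp_poly n w).1.[x ^+ 2].
Proof.
move=> hP x.
suff -> : P = (if odd n then 'X else 1) * ((qsp_poly n w).1 \Po 'X ^+ 2).
  by rewrite hornerM horner_comp hornerXn; case: (odd n); rewrite ?hornerX ?hornerC.
apply: poly_eq_on_unit_interval => y y_real y_bound.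
rewrite -hP // (qsp_mx_col n w y).1 hornerM horner_comp hornerXn.
by case: (odd n); rewrite ?hornerX ?hornerC.
Qed.

End QspPolynomialIdentity.

Arguments qsp_top_left_poly {C n w P}.

Section SingularValueTransform.
Variables (C : numClosedFieldType) (N : nat) (U Pi Pit : 'M[C]_N).
Variables (psi : 'I_(\rank Pi) -> 'cV[C]_N) (psit : 'I_(\rank Pit) -> 'cV[C]_N).
Variable s : 'I_(\rank Pi) -> C.
Hypotheses (hPi : orth_proj Pi) (hPit : orth_proj Pit).
Hypothesis hsvd : is_svd (Pit *m U *m Pi) Pi Pit psi psit s.

Let A := Pit *m U *m Pi.
Let m := minn (\rank Pi) (\rank Pit).
Let wl := widen_ord (geq_minl (\rank Pi) (\rank Pit)).
Let wr := widen_ord (geq_minr (\rank Pi) (\rank Pit)).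

Lemma svd_mul_onb j :
  A *m psi j = \sum_(i < m) ((wl i == j)%:R * s (wl i)) *: psit (wr i).
Proof.
have [[psi_orth _] [_ [_ [_ A_svd]]]] := hsvd.
rewrite /A A_svd mulmx_suml; apply: eq_bigr => i _.
by rewrite -scalemxAl -mulmxA psi_orth mul_mx_scalar scalerA mulrC.
Qed.

Lemma svd_mul_onb_lt (i : 'I_m) : A *m psi (wl i) = s (wl i) *: psit (wr i).
Proof.
rewrite svd_mul_onb (bigD1 i) //= eqxx mul1r big1 ?addr0 // => k k_neq_i.
suff /negbTE -> : wl k != wl i by rewrite mul0r scale0r.
by rewrite -val_eqE /= val_eqE.
Qed.

Lemma svd_mul_onb_ge (j : 'I_(\rank Pi)) : (m <= j)%N -> A *m psi j = 0.
Proof.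
move=> m_le_j; rewrite svd_mul_onb big1 // => k _.
suff /negbTE -> : wl k != j by rewrite mul0r scale0r.
by apply: contraTneq m_le_j => <-; rewrite -ltnNge; exact: ltn_ord k.
Qed.

Lemma svd_adj_mul_onb (i : 'I_m) : A^t* *m psit (wr i) = s (wl i) *: psi (wl i).
Proof.
have [_ [[psit_orth _] [s_ge0 [_ A_svd]]]] := hsvd.
rewrite /A A_svd adjmx_sum mulmx_suml (bigD1 i) //= big1 ?addr0 => [|k k_neq_i].
  rewrite adjmxZ adjmxM trmxCK geC0_conj // -scalemxAl -mulmxA psit_orth eqxx.
  by rewrite mul_mx_scalar scale1r.
rewrite adjmxZ adjmxM trmxCK -scalemxAl -mulmxA psit_orth.
suff /negbTE -> : wr k != wr i by rewrite mul_mx_scalar scale0r scaler0.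
by rewrite -val_eqE /= val_eqE.
Qed.

Lemma Pit_U_onb j : Pit *m (U *m psi j) = A *m psi j.
Proof. by rewrite /A -!mulmxA (onb_proj_fix hPi hsvd.1). Qed.

Lemma svd_gram (j : 'I_(\rank Pi)) :
  Pi *m (U^t* *m (Pit *m (U *m psi j))) = s j ^+ 2 *: psi j.
Proof.
have [_ [onb_Pit [_ [s_ge_m _]]]] := hsvd.
have A_adj : A^t* = Pi *m U^t* *m Pit by rewrite !adjmxM hPi.2 hPit.2 mulmxA.
rewrite Pit_U_onb.
have [j_lt_m | m_le_j] := ltnP j m; last first.
  by rewrite svd_mul_onb_ge // s_ge_m // expr0n scale0r !mulmx0.
have -> : j = wl (Ordinal j_lt_m) by apply: val_inj.
rewrite svd_mul_onb_lt -!scalemxAr -(onb_proj_fix hPit onb_Pit) !mulmxA -A_adj.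
by rewrite svd_adj_mul_onb scalerA expr2.
Qed.

Hypothesis hU : U \is unitarymx.

Let U_coisometry : U *m U^t* = 1%:M := unitarymxP hU.
Let U_isometry : U^t* *m U = 1%:M := mulmx1C U_coisometry.

Lemma svt_odd_UPhi k v (f : C -> C) :
  odd k -> (forall x, f x = x * (qsp_poly k v).1.[x ^+ 2]) ->
  svt_odd Pi Pit f psi psit s = Pit *m UPhi k v U Pi Pit *m Pi.
Proof.
move=> k_odd f_def.
have UPhi_onb j :
    Pit *m UPhi k v U Pi Pit *m psi j = (qsp_poly k v).1.[s j ^+ 2] *: (A *m psi j).
  by rewrite -mulmxA (Pit_UPhi_odd U_coisometry U_isometry hPit.1
    (onb_proj_fix hPi hsvd.1 j) (svd_gram j) k_odd) Pit_U_onb.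
rewrite [X in _ = _ *m X](onb_outer_sum hPi hsvd.1) mulmx_sumr.
rewrite (eq_bigr (fun j => Pit *m UPhi k v U Pi Pit *m psi j *m (psi j)^t*)); last first.
  by move=> j _; rewrite !mulmxA.
rewrite (bigID (fun j : 'I_(\rank Pi) => (j < m)%N)) /=.
rewrite [X in _ = _ + X]big1 ?addr0; last first.
  by move=> j; rewrite -leqNgt => m_le_j; rewrite UPhi_onb svd_mul_onb_ge // scaler0 mul0mx.
rewrite (big_ord_narrow (geq_minl (\rank Pi) (\rank Pit))) /svt_odd.
apply: eq_bigr => i _.
by rewrite UPhi_onb svd_mul_onb_lt f_def -!scalemxAl scalerA mulrC.
Qed.

Lemma svt_even_UPhi k v (f : C -> C) :
  ~~ odd k -> (forall x, f x = (qsp_poly k v).1.[x ^+ 2]) ->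
  svt_even Pi f psi s = Pi *m UPhi k v U Pi Pit *m Pi.
Proof.
move=> k_even f_def.
rewrite [X in _ = _ *m X](onb_outer_sum hPi hsvd.1) mulmx_sumr /svt_even.
apply: eq_bigr => j _.
rewrite !mulmxA -(mulmxA Pi) (Pi_UPhi_even U_coisometry U_isometry hPit.1
  (onb_proj_fix hPi hsvd.1 j) (svd_gram j) k_even).
by rewrite f_def -scalemxAl.
Qed.

End SingularValueTransform.

Arguments svt_odd_UPhi {C N U Pi Pit psi psit s} hPi hPit hsvd hU {k v f}.
Arguments svt_even_UPhi {C N U Pi Pit psi psit s} hPi hPit hsvd hU {k v f}.

Theorem mainTheorem8 (C : numClosedFieldType) (N : nat)
    (U Pi Pit : 'M[C]_N)
    (hU : U \is unitarymx) (hPi : orth_proj Pi) (hPit : orth_proj Pit)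
    (n : nat) (hn : (1 <= n)%N)
    (w : nat -> C) (hw : forall j : nat, (1 <= j <= n)%N -> `|w j| = 1)
    (P : {poly C}) (hPdeg : (size P <= n.+1)%N)
    (hP : forall x : C, x \is Num.real -> -1 <= x <= 1 ->
            qsp_mx n w x ord0 ord0 = P.[x])
    (psi : 'I_(\rank Pi) -> 'cV[C]_N) (psit : 'I_(\rank Pit) -> 'cV[C]_N)
    (s : 'I_(\rank Pi) -> C)
    (hsvd : is_svd (Pit *m U *m Pi) Pi Pit psi psit s) :
  if odd n then
    svt_odd Pi Pit (fun x => P.[x]) psi psit s = Pit *m UPhi n w U Pi Pit *m Pi
  else
    svt_even Pi (fun x => P.[x]) psi s = Pi *m UPhi n w U Pi Pit *m Pi.
Proof.
have P_qsp := qsp_top_left_poly hP.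
case: ifP => n_parity.
- by apply: (svt_odd_UPhi hPi hPit hsvd hU) => // x; rewrite P_qsp n_parity.
- apply: (svt_even_UPhi hPi hPit hsvd hU) => [|x]; first by rewrite n_parity.
  by rewrite P_qsp n_parity mul1r.
Qed.
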